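(* The class of matroids satisfying the symmetric strong circuit elimination property is closed under series minors: if $M$ satisfies it and $N$ is a series minor of $M$, then $N$ satisfies it.
   Context: A matroid $M$ has the symmetric strong circuit elimination property if, whenever $C_1$ and $C_2$ are circuits of $M$ and $e_1,e_2,e$ are elements with $e_1\in C_1-C_2$, $e_2\in C_2-C_1$ and $e\in C_1\cap C_2$, there is a circuit $C_3$ of $M$ with $\{e_1,e_2\}\subseteq C_3\subseteq (C_1\cup C_2)-e$. A series contraction of $M$ is the contraction $M/f$ of an element $f$ for which there is $g$ with $\{f,g\}$ a cocircuit of $M$; a matroid $N$ is a series minor of $M$ if $N$ can be obtained from $M$ by a sequence of deletions and series contractions. *)

From mathcomp Require Import all_boot.
Set Implicit Arguments. Unset Strict Implicit. Unset Printing Implicit Defensive.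

Record mstruct (T : finType) := MStruct {
  ground : {set T};
  circuits : {set {set T}}
}.

Definition is_matroid (T : finType) (M : mstruct T) : Prop :=
  [/\ (forall C, C \in circuits M -> C \subset ground M),
      set0 \notin circuits M,
      (forall C1 C2, C1 \in circuits M -> C2 \in circuits M ->
          C1 \subset C2 -> C1 = C2)
    & (forall C1 C2 e, C1 \in circuits M -> C2 \in circuits M -> C1 != C2 ->
          e \in C1 :&: C2 ->
          exists2 C3, C3 \in circuits M & C3 \subset (C1 :|: C2) :\ e)].

Definition independent (T : finType) (M : mstruct T) (I : {set T}) : bool :=
  (I \subset ground M) && [forall C in circuits M, ~~ (C \subset I)].

Definition basis (T : finType) (M : mstruct T) (B : {set T}) : bool :=
  independent M B &&
  [forall B' : {set T}, (independent M B' && (B \subset B')) ==> (B' == B)].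

(* Cocircuits = circuits of the dual matroid, whose bases are the complements
   (in the ground set) of bases of M: i.e. minimal subsets of the ground set
   not contained in the complement of any basis, i.e. meeting every basis. *)
Definition cocircuit (T : finType) (M : mstruct T) (D : {set T}) : bool :=
  minset (fun X : {set T} => (X \subset ground M) &&
            [forall B : {set T}, basis M B ==> (X :&: B != set0)]) D.

Definition delete (T : finType) (M : mstruct T) (X : {set T}) : mstruct T :=
  MStruct (ground M :\: X) [set C in circuits M | [disjoint C & X]].

Definition contract (T : finType) (M : mstruct T) (f : T) : mstruct T :=
  MStruct (ground M :\ f)
    [set X : {set T} | minset (fun Y : {set T} => (Y != set0) &&
                          [exists C in circuits M, Y == C :\ f]) X].

Definition series_step (T : finType) (M N : mstruct T) : Prop :=
  (exists X : {set T}, N = delete M X) \/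
  (exists f g : T, f \in ground M /\ cocircuit M [set f; g] /\ N = contract M f).

Inductive series_minor (T : finType) (M : mstruct T) : mstruct T -> Prop :=
  | sm_refl : series_minor M M
  | sm_step N N' : series_minor M N -> series_step N N' -> series_minor M N'.

Definition sym_strong_circuit_elim (T : finType) (M : mstruct T) : Prop :=
  forall (C1 C2 : {set T}) (e1 e2 e : T),
    C1 \in circuits M -> C2 \in circuits M ->
    e1 \in C1 :\: C2 -> e2 \in C2 :\: C1 -> e \in C1 :&: C2 ->
    exists2 C3, C3 \in circuits M &
      ([set e1; e2] \subset C3) && (C3 \subset (C1 :|: C2) :\ e).

From mathcomp Require Import all_boot.
Set Implicit Arguments. Unset Strict Implicit. Unset Printing Implicit Defensive.

(* Deletion keeps exactly the circuits avoiding the deleted set, so the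
   circuit axioms and symmetric strong elimination pass to it verbatim.
   For a series pair {f, g} the key fact is orthogonality: a circuit never
   meets a cocircuit in a single element.  Since cocircuits are defined through
   bases, this is proved by repeated basis exchange, moving a basis that
   almost avoids the cocircuit D towards the circuit C until C would lie in
   it.  Consequently every circuit through f also contains g, so C |-> C - f
   reflects inclusion on circuits; the circuits of M / f are then exactly the
   sets C - f, and elimination in M / f is elimination in M followed by
   removing f. *)

Section SetD1.
Variables (T : finType) (f : T).

Lemma setD1D (A B : {set T}) : (A :\ f) :\: (B :\ f) = (A :\: B) :\ f.
Proof. by apply/setP=> u; rewrite !inE; case: (u == f); rewrite ?andbF. Qed.

Lemma setD1I (A B : {set T}) : (A :\ f) :&: (B :\ f) = (A :&: B) :\ f.
Proof. by rewrite -setDIl. Qed.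

Lemma subset_setD1U (A B C : {set T}) e : A \subset (B :|: C) :\ e ->
  A :\ f \subset ((B :\ f) :|: (C :\ f)) :\ e.
Proof.
move=> sA; apply/subsetP=> u; rewrite !inE => /andP[uf /(subsetP sA)].
by rewrite !inE => /andP[ue /orP[]->]; rewrite ue uf ?orbT.
Qed.

End SetD1.

Lemma disjoint_subsetUD1 (T : finType) (A B C X : {set T}) e :
  A \subset (B :|: C) :\ e -> [disjoint B & X] -> [disjoint C & X] ->
  [disjoint A & X].
Proof.
move=> sA dB dC; apply: disjointWl (subset_trans sA (subD1set _ e)) _.
by move: dB dC; rewrite -!setI_eq0 setIUl => /eqP-> /eqP->; rewrite setU0.
Qed.

Section Matroid.
Variables (T : finType) (M : mstruct T).

Lemma independentP (I : {set T}) :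
  reflect (I \subset ground M /\ forall C, C \in circuits M -> ~~ (C \subset I))
          (independent M I).
Proof.
by apply: (iffP andP) => -[sI cI]; split=> //; apply/forall_inP.
Qed.

Lemma independentS (I J : {set T}) :
  I \subset J -> independent M J -> independent M I.
Proof.
move=> sIJ /independentP[sJ cJ]; apply/independentP; split.
  exact: subset_trans sIJ sJ.
by move=> C /cJ; apply: contra => /subset_trans; apply.
Qed.

Lemma dependent_circuit (I : {set T}) :
  I \subset ground M -> ~~ independent M I ->
  exists2 C, C \in circuits M & C \subset I.
Proof.
move=> sI; have [/exists_inP[C cC sCI] _|noC /negP[]] :=
  boolP [exists C in circuits M, C \subset I]; first by exists C.
apply/independentP; split=> // C cC.
by apply: contra noC => sCI; apply/exists_inP; exists C.
Qed.

Lemma basisP (B : {set T}) :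
  reflect (independent M B /\
           forall z, z \in ground M -> z \notin B -> ~~ independent M (z |: B))
          (basis M B).
Proof.
apply: (iffP andP) => -[iB maxB]; split=> //.
  move=> z zg zB; apply/negP=> izB; move/forallP/(_ (z |: B)): maxB.
  by rewrite izB subsetUr => /eqP eB; rewrite -eB setU11 in zB.
apply/forallP=> B'; apply/implyP=> /andP[iB' sBB'].
rewrite eqEsubset sBB' andbT; apply/subsetP=> z zB'; apply: contraT => zB.
have zg : z \in ground M by case/independentP: iB' => /subsetP sB' _; apply: sB'.
case/negP: (maxB z zg zB); apply: independentS iB'.
by rewrite subUset sub1set zB'.
Qed.

Lemma basis_sub_ground (B : {set T}) : basis M B -> B \subset ground M.
Proof. by case/basisP=> /independentP[]. Qed.

Lemma cocircuit_meets_basis (D B : {set T}) :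
  cocircuit M D -> basis M B -> D :&: B != set0.
Proof. by case/minsetP=> /andP[_ /forall_inP meet] _; apply: meet. Qed.

Lemma cocircuit_avoiding_basis (D : {set T}) x : cocircuit M D -> x \in D ->
  exists2 B, basis M B & D :&: B \subset [set x].
Proof.
move=> cD xD; have /minsetP[/andP[sD _] minD] := cD.
have /forallPn[B] : ~~ [forall B, basis M B ==> ((D :\ x) :&: B != set0)].
  apply/negP=> meet; have := minD (D :\ x).
  rewrite (subset_trans (subD1set D x) sD) meet subD1set => /(_ isT isT) DxD.
  by move: xD; rewrite -DxD setD11.
rewrite negb_imply negbK => /andP[bB /eqP DxB0].
exists B => //; apply/subsetP=> b /setIP[bD bB']; rewrite inE; apply: contraT => bx.
have : b \in (D :\ x) :&: B by rewrite !inE bx bD bB'.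
by rewrite DxB0 inE.
Qed.

Lemma circuit_setU1_mem (I C : {set T}) y : independent M I ->
  C \in circuits M -> C \subset y |: I -> y \in C.
Proof.
move=> /independentP[_ noC] cC sC; apply: contraT => yC.
case/negP: (noC C cC); apply/subsetP=> u uC.
by move: (subsetP sC u uC); rewrite !inE => /orP[/eqP uy|//]; rewrite -uy uC in yC.
Qed.

Lemma fundamental_circuit (B : {set T}) y :
  basis M B -> y \in ground M -> y \notin B ->
  exists2 C, C \in circuits M & (y \in C) && (C \subset y |: B).
Proof.
move=> bB yg yB; have /basisP[iB maxB] := bB.
have [|C cC sC] := dependent_circuit _ (maxB y yg yB).
  by rewrite subUset sub1set yg basis_sub_ground.
by exists C; rewrite // sC (circuit_setU1_mem iB cC sC).
Qed.

Hypothesis matM : is_matroid M.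

Lemma circuit_sub_ground (C : {set T}) : C \in circuits M -> C \subset ground M.
Proof. by case: matM => sub _ _ _; apply: sub. Qed.

Lemma circuit_neq0 (C : {set T}) : C \in circuits M -> C != set0.
Proof. by case: matM => _ c0 _ _ cC; apply: contraNneq c0 => <-. Qed.

Lemma circuit_eq_of_subset (C1 C2 : {set T}) :
  C1 \in circuits M -> C2 \in circuits M -> C1 \subset C2 -> C1 = C2.
Proof. by case: matM => _ _ clutter _; apply: clutter. Qed.

Lemma circuit_elim (C1 C2 : {set T}) e :
  C1 \in circuits M -> C2 \in circuits M -> C1 != C2 -> e \in C1 -> e \in C2 ->
  exists2 C3, C3 \in circuits M & C3 \subset (C1 :|: C2) :\ e.
Proof.
by case: matM => _ _ _ elim c1 c2 ne e1 e2; apply: elim; rewrite ?inE ?e1.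
Qed.

Lemma circuit_setU1_unique (I C1 C2 : {set T}) y : independent M I ->
  C1 \in circuits M -> C2 \in circuits M ->
  C1 \subset y |: I -> C2 \subset y |: I -> C1 = C2.
Proof.
move=> iI c1 c2 s1 s2; apply/eqP; apply: contraT => ne.
have [C3 c3 s3] := circuit_elim c1 c2 ne (circuit_setU1_mem iI c1 s1)
                                         (circuit_setU1_mem iI c2 s2).
case/independentP: iI => _ /(_ C3 c3)/negP[].
by apply: subset_trans s3 _; rewrite subDset subUset s1 s2.
Qed.

Lemma basis_exchange (B C : {set T}) y w :
  basis M B -> y \in ground M -> y \notin B ->
  C \in circuits M -> C \subset y |: B -> w \in C -> basis M ((y |: B) :\ w).
Proof.
move=> bB yg yB cC sC wC; have /basisP[iB _] := bB.
have gyB : y |: B \subset ground M by rewrite subUset sub1set yg basis_sub_ground.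
apply/basisP; split.
  apply/independentP; split; first exact: subset_trans (subD1set _ w) gyB.
  move=> K cK; apply/negP => /subsetD1P[sK wK].
  by move: wK; rewrite (circuit_setU1_unique iB cK cC sK sC) wC.
move=> z zg; have [-> _ | zw] := eqVneq z w.
  apply/negP => /independentP[_ /(_ C cC)/negP[]]; apply/subsetP=> u uC.
  by move: (subsetP sC u uC); rewrite !inE; case: (u == w).
rewrite !inE zw /= negb_or => /andP[zy zB].
have [Cz cCz /andP[zCz sCz]] := fundamental_circuit bB zg zB.
apply/negP => /independentP[_ noC].
have sub : (Cz :|: C) :\ w \subset z |: ((y |: B) :\ w).
  apply/subsetP=> u; rewrite !inE => /andP[uw /orP[/(subsetP sCz)|/(subsetP sC)]];
    by rewrite !inE uw => /orP[]->; rewrite ?orbT.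
have [wCz | wCz] := boolP (w \in Cz); last first.
  by case/negP: (noC Cz cCz); apply: subset_trans sub; rewrite subsetD1 subsetUl wCz.
have neC : Cz != C.
  apply: contraTneq (circuit_setU1_mem iB cC sC) => <-.
  apply/negP=> /(subsetP sCz); rewrite !inE (negbTE yB) orbF => /eqP yz.
  by rewrite yz eqxx in zy.
have [K cK sK] := circuit_elim cCz cC neC wCz wC.
by case/negP: (noC K cK); apply: subset_trans sK sub.
Qed.

Lemma orthogonality_descent (D C B : {set T}) x :
  cocircuit M D -> C \in circuits M -> C :&: D = [set x] ->
  basis M B -> D :&: B \subset [set x] ->
  exists2 B1, basis M B1 &
    (D :&: B1 \subset [set x]) && (#|C :\: B1| < #|C :\: B|).
Proof.
move=> cD cC CD bB sB; have /basisP[iB _] := bB.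
have xC : x \in C by have := set11 x; rewrite -CD => /setIP[].
have xB : x \in B.
  have /set0Pn[b bDB] := cocircuit_meets_basis cD bB.
  by have := subsetP sB b bDB; rewrite inE => /eqP <-; case/setIP: bDB.
have /independentP[_ /(_ C cC)/subsetPn[y yC yB]] := iB.
have yD : y \notin D.
  apply: contraNN yB => yD; have : y \in C :&: D by rewrite inE yC yD.
  by rewrite CD inE => /eqP->.
have yg : y \in ground M := subsetP (circuit_sub_ground cC) y yC.
have [C' cC' /andP[yC' sC']] := fundamental_circuit bB yg yB.
have DyB w : D :&: ((y |: B) :\ w) \subset (D :&: B) :\ w.
  apply/subsetP=> u; rewrite !inE => /andP[uD /andP[uw /orP[/eqP uy|uB]]].
    by rewrite -uy uD in yD.
  by rewrite uw uD uB.
have xC' : x \notin C'.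
  apply/negP=> xC'; have bB1 := basis_exchange bB yg yB cC' sC' xC'.
  case/negP: (cocircuit_meets_basis cD bB1); rewrite -subset0.
  by apply: subset_trans (DyB x) _; rewrite subDset setU0.
have /subsetPn[w wC' wC] : ~~ (C' \subset C).
  by apply: contra xC' => /(circuit_eq_of_subset cC' cC) ->.
have wy : w != y by apply: contraNneq wC => ->.
exists ((y |: B) :\ w); first exact: basis_exchange bB yg yB cC' sC' wC'.
apply/andP; split; first exact: subset_trans (DyB w) (subset_trans (subD1set _ w) sB).
apply/proper_card/properP; split.
  apply/subsetP=> u; rewrite !inE => /andP[uB1 uC]; rewrite uC andbT.
  apply: contra uB1 => uB; rewrite uB orbT andbT.
  by apply: contraNneq wC => <-.
exists y; first by rewrite inE yC yB.
by rewrite !inE eqxx eq_sym wy.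
Qed.

Lemma circuit_cocircuit_meet1 (D C : {set T}) x :
  cocircuit M D -> C \in circuits M -> C :&: D != [set x].
Proof.
move=> cD cC; apply/eqP=> CD.
have xD : x \in D by have := set11 x; rewrite -CD => /setIP[].
have [B bB sB] := cocircuit_avoiding_basis cD xD.
suff noB : forall n B,
    #|C :\: B| < n -> basis M B -> D :&: B \subset [set x] -> False.
  exact: noB _ B (ltnSn _) bB sB.
elim=> // n IH B' ltB' bB' sB'.
have [B1 bB1 /andP[sB1 lt1]] := orthogonality_descent cD cC CD bB' sB'.
by apply: IH bB1 sB1; apply: leq_trans lt1 _; rewrite -ltnS.
Qed.

Lemma series_partner (C : {set T}) f g : cocircuit M [set f; g] ->
  C \in circuits M -> f \in C -> g \in C :\ f.
Proof.
move=> cD cC fC; apply: contraT => gC.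
case/negP: (circuit_cocircuit_meet1 f cD cC).
rewrite eqEsubset sub1set !inE fC eqxx andbT.
apply/subsetP=> u; rewrite !inE => /andP[uC /orP[//|/eqP ug]].
by move: gC; rewrite !inE -ug uC andbT negbK.
Qed.

Section SeriesContraction.
Variables f g : T.
Hypothesis cofg : cocircuit M [set f; g].

Lemma circuit_eq_of_subsetD1 (C1 C2 : {set T}) :
  C1 \in circuits M -> C2 \in circuits M -> C1 :\ f \subset C2 :\ f -> C1 = C2.
Proof.
move=> c1 c2 s12; apply: (circuit_eq_of_subset c1 c2); apply/subsetP=> u.
have [-> fC1 | uf uC1] := eqVneq u f; last first.
  by move/subsetP/(_ u): s12; rewrite !inE uf uC1 => /(_ isT)/andP[].
have /setD1P[_ gC2] := subsetP s12 g (series_partner cofg c1 fC1).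
have cogf : cocircuit M [set g; f] by rewrite setUC.
by case/setD1P: (series_partner cogf c2 gC2).
Qed.

Lemma circuit_contractP (X : {set T}) :
  reflect (exists2 C, C \in circuits M & X = C :\ f)
          (X \in circuits (contract M f)).
Proof.
rewrite inE; apply: (iffP minsetP) => [[/andP[_ /exists_inP[C cC /eqP->]] _]|].
  by exists C.
case=> C cC ->; split.
  rewrite andbC; apply/andP; split; first by apply/exists_inP; exists C.
  have /set0Pn[c cC'] := circuit_neq0 cC; apply/set0Pn.
  have [cf | cf] := eqVneq c f; last by exists c; apply/setD1P.
  by exists g; apply: series_partner cofg cC _; rewrite -cf.
move=> Y /andP[_ /exists_inP[C' cC' /eqP->]] sC'C.
by rewrite (circuit_eq_of_subsetD1 cC' cC sC'C).
Qed.

Lemma contract_matroid : is_matroid (contract M f).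
Proof.
split.
- by move=> _ /circuit_contractP[C cC ->]; apply/setSD/circuit_sub_ground.
- by rewrite inE; apply/negP=> /minsetP[/andP[]]; rewrite eqxx.
- move=> _ _ /circuit_contractP[C1 c1 ->] /circuit_contractP[C2 c2 ->] s12.
  by rewrite (circuit_eq_of_subsetD1 c1 c2 s12).
move=> _ _ e /circuit_contractP[C1 c1 ->] /circuit_contractP[C2 c2 ->] ne.
rewrite setD1I => /setD1P[_ /setIP[e1 e2]].
have [|C3 c3 s3] := circuit_elim c1 c2 _ e1 e2; first by apply: contraNneq ne => ->.
exists (C3 :\ f); first by apply/circuit_contractP; exists C3.
exact: subset_setD1U s3.
Qed.

Lemma contract_sym_strong_circuit_elim :
  sym_strong_circuit_elim M -> sym_strong_circuit_elim (contract M f).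
Proof.
move=> sseM _ _ e1 e2 e /circuit_contractP[C1 c1 ->] /circuit_contractP[C2 c2 ->].
rewrite !setD1D setD1I => /setD1P[e1f k1] /setD1P[e2f k2] /setD1P[_ k3].
have [C3 c3 /andP[s12 s3]] := sseM _ _ _ _ _ c1 c2 k1 k2 k3.
exists (C3 :\ f); first by apply/circuit_contractP; exists C3.
by rewrite subsetD1 s12 subset_setD1U // !inE negb_or ![f == _]eq_sym e1f e2f.
Qed.

End SeriesContraction.

End Matroid.

Section Deletion.
Variables (T : finType) (M : mstruct T) (X : {set T}).

Lemma circuit_deleteE (C : {set T}) :
  (C \in circuits (delete M X)) = (C \in circuits M) && [disjoint C & X].
Proof. by rewrite inE. Qed.

Lemma delete_matroid : is_matroid M -> is_matroid (delete M X).
Proof.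
move=> matM; split=> /=.
- by move=> C; rewrite circuit_deleteE subsetD => /andP[/(circuit_sub_ground matM)->].
- by rewrite circuit_deleteE; apply/negP=> /andP[/(circuit_neq0 matM)]; rewrite eqxx.
- move=> C1 C2; rewrite !circuit_deleteE => /andP[c1 _] /andP[c2 _].
  exact: (circuit_eq_of_subset matM c1 c2).
move=> C1 C2 e; rewrite !circuit_deleteE => /andP[c1 d1] /andP[c2 d2] ne.
case/setIP=> e1 e2; have [C3 c3 s3] := circuit_elim matM c1 c2 ne e1 e2.
by exists C3; rewrite // circuit_deleteE c3 (disjoint_subsetUD1 s3).
Qed.

Lemma delete_sym_strong_circuit_elim :
  sym_strong_circuit_elim M -> sym_strong_circuit_elim (delete M X).
Proof.
move=> sseM C1 C2 e1 e2 e; rewrite !circuit_deleteE.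
move=> /andP[c1 d1] /andP[c2 d2] k1 k2 k3.
have [C3 c3 /andP[s12 s3]] := sseM _ _ _ _ _ c1 c2 k1 k2 k3.
by exists C3; rewrite ?s12 // circuit_deleteE c3 (disjoint_subsetUD1 s3).
Qed.

End Deletion.

Theorem lemma2p1 (T : finType) (M N : mstruct T) :
  is_matroid M -> sym_strong_circuit_elim M -> series_minor M N ->
  sym_strong_circuit_elim N.
Proof.
move=> matM sseM minorMN.
suff [] : is_matroid N /\ sym_strong_circuit_elim N by [].
elim: minorMN => [|N0 _ _ [matN0 sseN0] [[X ->]|[f [g [_ [cofg ->]]]]]].
- by split.
- by split; [apply: delete_matroid | apply: delete_sym_strong_circuit_elim].
split; first exact: contract_matroid matN0 _ _ cofg.
exact: contract_sym_strong_circuit_elim matN0 _ _ cofg sseN0.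
Qed.
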